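(* For every $\epsilon>0$ there is a constant $c$ such that every parenthesis matching $M$ on $n$ vertices satisfies $$r_<(M,K_3)\le c\,n^{1+\epsilon}.$$
   Context: An ordered graph on $[N]$ is a graph with vertex set $\{1,\dots,N\}$ equipped with the natural order. Given a red/blue coloring of the edges of the complete graph on $[N]$, a red (ordered) copy of an ordered graph $G$ on $[p]$ is a strictly increasing map $\varphi:[p]\to[N]$ such that $\varphi(u)\varphi(v)$ is red for every edge $uv$ of $G$. The ordered Ramsey number $r_<(G,K_3)$ is the smallest $N$ such that every red/blue coloring of the edges of the complete graph on $[N]$ contains either a red ordered copy of $G$ or a blue triangle. A parenthesis matching is an ordered perfect matching on $[n]$ in which no two edges cross: for any two edges $\{i,j\}$, $\{k,l\}$ with $i<j$, $k<l$, the intervals $[i,j]$ and $[k,l]$ are either disjoint or one is contained in the other (equivalently, it is the matching induced by a balanced parenthesis sequence, matched parentheses forming the edges). *)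

From mathcomp Require Import all_boot.
From Stdlib Require Import Reals.

Set Implicit Arguments.
Unset Strict Implicit.
Unset Printing Implicit Defensive.

(* A red/blue colouring of the edges of the complete graph on [N]:
   the edge {i,j} with i < j is red iff c i j = true (values of c on pairs
   with i >= j are irrelevant). *)
Definition coloring (N : nat) := 'I_N -> 'I_N -> bool.

(* An ordered graph on [p] is given by a relation g; the edge {u,v}, u < v,
   is present iff g u v. *)
Definition red_copy (p : nat) (g : rel 'I_p) (N : nat) (c : coloring N) : Prop :=
  exists phi : 'I_p -> 'I_N,
    (forall u v : 'I_p, u < v -> phi u < phi v) /\
    (forall u v : 'I_p, u < v -> g u v -> c (phi u) (phi v)).

Definition blue_triangle (N : nat) (c : coloring N) : Prop :=
  exists i j k : 'I_N,
    [/\ i < j, j < k, ~~ c i j, ~~ c i k & ~~ c j k].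

Definition arrows_K3 (p : nat) (g : rel 'I_p) (N : nat) : Prop :=
  forall c : coloring N, red_copy g c \/ blue_triangle c.

Definition is_parenthesis_matching (n : nat) (m : rel 'I_n) : Prop :=
  [/\ symmetric m, irreflexive m,
      (forall i : 'I_n, exists! j : 'I_n, m i j) &
      (forall i j k l : 'I_n, i < j -> k < l -> m i j -> m k l ->
         (j < k \/ l < i) \/ (k <= i /\ j <= l) \/ (i <= k /\ l <= j))].

(* Encode the matching as a non-crossing fixed-point-free involution f and fix
   a colouring without blue triangle.  By strong induction on s, every f-closed
   interval of length s embeds red into every interval of length s * h(s) of
   the host, where h(s) is about A s^eps.  If some host vertex has blue degree
   at least s, its blue neighbourhood is a red clique.  Otherwise a closed
   interval that is not a single arc splits into two shorter ones.  A single
   arc is followed inwards along nested arcs as long as the parts left outside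
   the next arc are short (a 1/d fraction); this spine ends in an arc whose
   inner arcs are all at most a (1 - 1/d) fraction of its content, which
   therefore embeds blockwise by induction at the cheaper rate h((1 - 1/d) s).
   The spine arcs go to nested pairs of host vertices placed symmetrically
   around that block; since blue degrees are small, a suitable shift makes few
   of these pairs blue, and blue pairs are skipped.  The gains
   h(s) - h((1 - 1/d) s) >= 8 and h(s) >= 4 h(s/d) + 12 pay for the skipped
   pairs and the short side parts, and s h(s) = O(s^(1+eps)). *)

From Stdlib Require Import Reals Lra ZArith Classical.
From mathcomp Require Import all_boot zify.

Set Implicit Arguments.
Unset Strict Implicit.
Unset Printing Implicit Defensive.

Lemma exists_le_mean (g : nat -> nat) D : 0 < D ->
  exists2 c, c < D & D * g c <= \sum_(0 <= i < D) g i.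
Proof.
case: D => // D _.
have [c _ cmin] := arg_minnP (fun i : 'I_D.+1 => g i) (isT : xpredT ord0).
exists c => //; rewrite -{1}(subn0 D.+1) -sum_nat_const_nat !big_mkord.
by apply: leq_sum => i _; apply: cmin.
Qed.

Lemma count_index_iota_cat (P : pred nat) a m b : a <= m -> m <= b ->
  count P (index_iota a b) = count P (index_iota a m) + count P (index_iota m b).
Proof.
move=> am mb; rewrite /index_iota -count_cat -{2}(subnKC am) -iotaD.
by congr (count _ (iota _ _)); lia.
Qed.

Lemma first_hit (r : nat -> bool) a b :
  count (fun y => ~~ r y) (index_iota a b) < b - a ->
  exists y, [/\ a <= y < b, r y & count (fun y => ~~ r y) (index_iota a b) =
                                  (y - a) + count (fun y => ~~ r y) (index_iota y.+1 b)].
Proof.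
rewrite /index_iota; move kE: (b - a) => k; elim: k a kE => [|k IH] a kE cnt; first lia.
have kE' : b - a.+1 = k by lia.
case: (boolP (r a)) => ra.
  by exists a; rewrite /= ra subnn kE'; split=> //; lia.
move: cnt; rewrite /= ra /= => cnt.
have [y [/andP [ay yb] ry ->]] := IH a.+1 kE' (ltac:(lia)).
by exists y; split=> //; lia.
Qed.

Section Embeddings.

Variables (n : nat) (f : nat -> nat).
Hypothesis f_lt : forall i, i < n -> f i < n.
Hypothesis f_inv : forall i, i < n -> f (f i) = i.
Hypothesis f_neq : forall i, i < n -> f i != i.
Hypothesis f_noncrossing :
  forall i j, i < n -> i < f i -> i < j -> j < f i -> i < f j < f i.

Variables (N : nat) (col : nat -> nat -> bool).

Definition closed_itv p q := forall i, p <= i < q -> p <= f i < q.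

Definition red_emb p q lo hi (phi : nat -> nat) :=
  [/\ forall i j, p <= i -> i < j -> j < q -> phi i < phi j,
      forall i, p <= i < q -> lo <= phi i < hi &
      forall i, p <= i < q -> i < f i -> col (phi i) (phi (f i))].

Lemma red_emb_widen p q lo hi lo' hi' phi :
  red_emb p q lo hi phi -> lo' <= lo -> hi <= hi' -> red_emb p q lo' hi' phi.
Proof. by case=> mono range red lo'lo hihi'; split=> // i /range; lia. Qed.

Lemma red_emb_nil p q lo hi phi : q <= p -> red_emb p q lo hi phi.
Proof. by move=> qp; split=> *; lia. Qed.

Lemma closed_itv_cat p r q :
  closed_itv p r -> closed_itv r q -> p <= r -> r <= q -> closed_itv p q.
Proof.
move=> cl1 cl2 pr rq i ipq; case: (ltnP i r) => ir.
  by have := cl1 i; lia.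
by have := cl2 i; lia.
Qed.

Lemma red_emb_cat p r q lo1 hi1 lo2 hi2 phi1 phi2 :
  closed_itv p r -> closed_itv r q -> p <= r -> r <= q ->
  red_emb p r lo1 hi1 phi1 -> red_emb r q lo2 hi2 phi2 ->
  lo1 <= lo2 -> hi1 <= lo2 -> hi1 <= hi2 ->
  red_emb p q lo1 hi2 (fun i => if i < r then phi1 i else phi2 i).
Proof.
move=> cl1 cl2 pr rq [mono1 range1 red1] [mono2 range2 red2] l12 h1l2 h12; split.
- move=> i j pi ij jq; case: (ltnP i r) => ir; case: (ltnP j r) => jr.
  + exact: mono1.
  + by have := range1 i; have := range2 j; lia.
  + lia.
  + exact: mono2.
- move=> i ipq; case: (ltnP i r) => ir.
  + by have := range1 i; lia.
  + by have := range2 i; lia.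
- move=> i ipq ifi; case: (ltnP i r) => ir.
  + have /andP [_ ->] := cl1 i (ltac:(lia)).
    by apply: red1 => //; lia.
  + have /andP [rfi _] := cl2 i (ltac:(lia)).
    by rewrite ltnNge rfi /=; apply: red2 => //; lia.
Qed.

Lemma closed_itv_arc_inner p : p < n -> p < f p -> closed_itv p.+1 (f p).
Proof. by move=> pn pfp i /andP [pi ifp]; have := f_noncrossing pn pfp pi ifp; lia. Qed.

Lemma closed_itv_arc p : p < n -> p < f p -> closed_itv p (f p).+1.
Proof.
move=> pn pfp i /andP [pi ifp].
have [->|ip] := eqVneq i p; first lia.
have [->|ifp'] := eqVneq i (f p); first by rewrite f_inv //; lia.
by have := f_noncrossing pn pfp (j := i) (ltac:(lia)) (ltac:(lia)); lia.
Qed.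

Lemma closed_itv_head_arc p q : q <= n -> p < q -> closed_itv p q -> p < f p < q.
Proof.
move=> qn pq cl; have /andP [pfp fpq] := cl p (ltac:(lia)).
by have := f_neq (i := p) (ltac:(lia)); lia.
Qed.

Lemma closed_itv_behead_arc p q :
  q <= n -> p < q -> closed_itv p q -> closed_itv (f p).+1 q.
Proof.
move=> qn pq cl; have /andP [pfp fpq] := closed_itv_head_arc qn pq cl.
move=> i /andP [fpi iq]; have /andP [pfi ->] := cl i (ltac:(lia)).
rewrite andbT ltnNge; apply/negP => fifp.
by have := closed_itv_arc (p := p) (ltac:(lia)) pfp (i := f i) (ltac:(lia)); rewrite f_inv; lia.
Qed.

Lemma red_emb_arc p lo hi a b phi :
  p < n -> p < f p -> red_emb p.+1 (f p) lo hi phi ->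
  a < lo -> hi <= b -> a < b -> col a b ->
  red_emb p (f p).+1 a b.+1 (fun i => if i == p then a else if i == f p then b else phi i).
Proof.
move=> pn pfp [mono range red] alo hib ab cab; have cl := closed_itv_arc_inner pn pfp.
split.
- move=> i j pi ij jq.
  have [ip|ip] := eqVneq i p; have [jp|jp] := eqVneq j p;
  have [ie|ie] := eqVneq i (f p); have [je|je] := eqVneq j (f p);
  try (have := range i (ltac:(lia))); try (have := range j (ltac:(lia))); try lia.
  by move=> _ _; apply: mono; lia.
- move=> i /andP [pi ifp].
  have [ip|ip] := eqVneq i p; first lia.
  have [ie|ie] := eqVneq i (f p); first lia.
  by have := range i; lia.
- move=> i /andP [pi ifp] ifi.
  have [->|ip] := eqVneq i p; first by rewrite ?eqxx (negbTE (f_neq pn)) ?eqxx.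
  have [ie|ie] := eqVneq i (f p); first by move: ifi; rewrite ie f_inv //; lia.
  have /andP [pfi fifp] := cl i (ltac:(lia)).
  rewrite (ltac:(lia) : (f i == p) = false) (ltac:(lia) : (f i == f p) = false).
  by apply: red => //; lia.
Qed.

Hypothesis no_blue_triangle :
  forall x y z, x < y -> y < z -> z < N -> [|| col x y, col x z | col y z].

Definition blue v w := ~~ col (minn v w) (maxn v w).
Definition blue_deg lo hi v := count (fun w : nat => (w != v) && blue v w) (index_iota lo hi).

Lemma blueE v w : v < w -> blue v w = ~~ col v w.
Proof. by move=> vw; rewrite /blue (minn_idPl (ltnW vw)) (maxn_idPr (ltnW vw)). Qed.

Lemma blueC v w : blue v w = blue w v.
Proof. by rewrite /blue minnC maxnC. Qed.

Lemma red_of_blue_nbrs v w1 w2 : w1 < w2 -> w2 < N -> v < N ->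
  v != w1 -> v != w2 -> blue v w1 -> blue v w2 -> col w1 w2.
Proof.
move=> w12 w2N vN vw1 vw2; case: (ltngtP v w1) => [vlt1|w1ltv|]; last by move/eqP: vw1.
  rewrite !blueE //; last exact: ltn_trans w12.
  by move=> /negbTE b1 /negbTE b2; have := no_blue_triangle vlt1 w12 w2N; rewrite b1 b2.
rewrite blueC blueE //; case: (ltngtP v w2) => [vlt2|w2ltv|]; last by move/eqP: vw2.
  rewrite blueE // => /negbTE b1 /negbTE b2.
  by have := no_blue_triangle w1ltv vlt2 w2N; rewrite b1 b2 orbF.
rewrite blueC blueE // => /negbTE b1 /negbTE b2.
by have := no_blue_triangle w12 w2ltv vN; rewrite b1 b2 !orbF.
Qed.

(* The blue neighbourhood of a vertex is a red clique. *)
Lemma red_emb_blue_nbhd p q lo hi v : q <= n -> hi <= N -> lo <= v < hi ->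
  closed_itv p q -> q - p <= blue_deg lo hi v -> exists phi, red_emb p q lo hi phi.
Proof.
move=> qn hiN vlohi cl deg_ge.
set nbrs := [seq w <- index_iota lo hi | (w != v) && blue v w].
have size_nbrs : size nbrs = blue_deg lo hi v by rewrite size_filter.
have sorted_nbrs : sorted ltn nbrs.
  by apply: sorted_filter; [exact: ltn_trans | exact: iota_ltn_sorted].
have nbrsP k : k < size nbrs ->
    [/\ lo <= nth 0 nbrs k < hi, v != nth 0 nbrs k & blue v (nth 0 nbrs k)].
  move=> ks; have := mem_nth 0 ks.
  by rewrite mem_filter mem_index_iota eq_sym => /andP [/andP [-> ->] ->].
have nbrs_mono i j : i < j -> j < size nbrs -> nth 0 nbrs i < nth 0 nbrs j.
  by move=> ij js; apply: (sorted_ltn_nth ltn_trans 0 sorted_nbrs) => //; exact: ltn_trans js.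
exists (fun i => nth 0 nbrs (i - p)); split.
- by move=> i j pi ij jq; apply: nbrs_mono; lia.
- by move=> i ipq; have [] := nbrsP (i - p) (ltac:(lia)); lia.
- move=> i ipq ifi; have /andP [pfi fiq] := cl i ipq.
  have [r1 r2 r3] := nbrsP (i - p) (ltac:(lia)).
  have [s1 s2 s3] := nbrsP (f i - p) (ltac:(lia)).
  by apply: (red_of_blue_nbrs (v := v)) => //; [apply: nbrs_mono | |]; lia.
Qed.

Variables (d : nat) (h : nat -> nat).
Hypothesis d_ge2 : 2 <= d.
Hypothesis h_mono : forall x y, x <= y -> h x <= h y.
Hypothesis h_step_short :
  forall s m, 0 < m <= s -> d * m <= (d - 1) * s -> h m + 8 <= h s.
Hypothesis h_step_div : forall s, d <= s -> 4 * h (s %/ d) + 12 <= h s.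
Hypothesis h_ge10 : forall s, 0 < s -> 10 <= h s.

Definition host_size s := s * h s.

Definition balanced a b :=
  forall i, a <= i < b -> i < f i -> d * (f i + 1 - i) <= (d - 1) * (b - a).

(* [spine p cp cq g]: starting from the arc (p, f p) and repeatedly passing to
   a nested arc whose two side intervals together are shorter than a 1/d
   fraction of the current content, one reaches an arc with balanced content
   [cp, cq); g counts the arcs passed plus the host room needed by the side
   intervals. *)
Inductive spine : nat -> nat -> nat -> nat -> Prop :=
| SpineCore p : p < n -> p < f p -> balanced p.+1 (f p) -> spine p p.+1 (f p) 1
| SpineStep p x cp cq g : p < n -> p < f p -> p < x -> x < f x -> f x < f p ->
    closed_itv p.+1 x -> closed_itv (f x).+1 (f p) ->
    d * ((x - p.+1) + (f p - (f x).+1)) < f p - p.+1 ->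
    spine x cp cq g ->
    spine p cp cq (g + maxn (host_size (x - p.+1)) (host_size (f p - (f x).+1)) + 1).

Lemma balanced_or_nested_arc p : p < n -> p < f p ->
  balanced p.+1 (f p) \/
  exists x, [/\ p < x < f x, f x < f p, closed_itv p.+1 x, closed_itv (f x).+1 (f p) &
                d * ((x - p.+1) + (f p - (f x).+1)) < f p - p.+1].
Proof.
move=> pn pfp; set K := f p - p.+1.
pose long i := [&& p < i < f p, i < f i & (d - 1) * K < d * (f i + 1 - i)].
have [exlong|nolong] := boolP [exists i : 'I_n, long i]; last first.
  left=> i /andP [pi ifp] ifi; rewrite leqNgt; apply/negP => ilong.
  move/existsPn: nolong => /(_ (Ordinal (ltn_trans ifp (f_lt pn)))) /=.
  by rewrite /long ifi ilong; lia.
right; have [x xlong xmin] : exists2 x, long x & forall i, long i -> x <= i.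
  have exP : exists i, long i by move/existsP: exlong => [i li]; exists i.
  by case: (ex_minnP exP) => x; exists x.
move: (xlong) => /and3P [/andP [px xfp] xfx xK].
have cl := closed_itv_arc_inner pn pfp.
have fpn := f_lt pn.
have xn : x < n by lia.
have fxfp : f x < f p by have := cl x (ltac:(lia)); lia.
(* x is the leftmost long arc: an arc leaving [p+1, x) would contain (x, f x)
   and so would be long as well. *)
have clL : closed_itv p.+1 x.
  move=> i /andP [pi ix]; have /andP [pfi fifp] := cl i (ltac:(lia)).
  rewrite pfi ltnNge; apply/negP => xfi.
  have ifi : i < f i by lia.
  have [fi_x|fi_x] := eqVneq (f i) x; first by have := f_inv (i := i); rewrite fi_x; lia.
  have /andP [ifx fxfi] :=
    f_noncrossing (i := i) (j := x) (ltac:(lia)) ifi (ltac:(lia)) (ltac:(lia)).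
  have : long i.
    rewrite /long (ltac:(lia) : p < i < f p) ifi /=.
    by apply: (leq_trans xK); rewrite leq_mul2l; lia.
  by move/xmin; lia.
have clR : closed_itv (f x).+1 (f p).
  move=> i /andP [fxi ifp]; have /andP [pfi ->] := cl i (ltac:(lia)).
  rewrite andbT ltnNge; apply/negP => fifx; case: (ltnP (f i) x) => fi_lt_x.
    by have := clL (f i) (ltac:(lia)); rewrite f_inv; lia.
  by have := closed_itv_arc xn xfx (i := f i) (ltac:(lia)); rewrite f_inv; lia.
exists x; split => //; first by rewrite px.
have -> : (x - p.+1) + (f p - (f x).+1) = K - (f x + 1 - x) by rewrite /K; lia.
have : K <= d * K by rewrite leq_pmull //; lia.
by move: xK; rewrite mulnBr mulnBl mul1n; nia.
Qed.

Lemma spine_exists p : p < n -> p < f p -> exists cp cq g, spine p cp cq g.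
Proof.
move kE: (f p - p) => k; elim/ltn_ind: k p kE => k IH p kE pn pfp.
have [bal|[x [/andP [px xfx] fxfp clL clR short]]] := balanced_or_nested_arc pn pfp.
  by exists p.+1, (f p), 1; apply: SpineCore.
have xn : x < n by have := f_lt pn; lia.
have [cp [cq [g sp]]] := IH (f x - x) (ltac:(lia)) x erefl xn xfx.
by do 3 eexists; apply: SpineStep sp.
Qed.

Lemma spine_core p cp cq g : spine p cp cq g ->
  [/\ p < cp, cp <= cq, cq <= f p, closed_itv cp cq & balanced cp cq].
Proof.
elim=> {p cp cq g} [p pn pfp bal | p x cp cq g pn pfp px xfx fxfp _ _ _ _ [xcp cpcq cqfx cl bal]].
  by split=> //; exact: closed_itv_arc_inner.
by split=> //; lia.
Qed.

(* k counts the arcs of the spine and lam its side vertices. *)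
Lemma spine_size S p cp cq g : spine p cp cq g -> f p < p + S ->
  exists k lam, [/\ 0 < k, (f p).+1 - p = (cq - cp) + lam + 2 * k,
                    g <= lam * h (S %/ d) + k & lam = 0 \/ d <= S].
Proof.
elim=> {p cp cq g} [p pn pfp bal | p x cp cq g pn pfp px xfx fxfp _ _ short sp IH] pS.
  by exists 1, 0; split=> //; [lia | left].
have [k [lam [k_gt0 sizeE gE lamE]]] := IH (ltac:(lia)).
have [xcp cpcq cqfx _ _] := spine_core sp.
set a := x - p.+1; set b := f p - (f x).+1.
have abS : d * (a + b) < S by lia.
have side_le c : c <= a + b -> host_size c <= c * h (S %/ d).
  move=> cab; rewrite /host_size leq_mul2l h_mono ?orbT // leq_divRL; last lia.
  by rewrite mulnC; apply: leq_trans (ltnW abS); rewrite leq_mul2l cab orbT.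
exists k.+1, (lam + a + b); split=> //.
- by rewrite /a /b; lia.
- have := side_le a (leq_addr _ _); have := side_le b (leq_addl _ _).
  by rewrite !mulnDl; lia.
- case: (posnP (a + b)) => ab0; first by case: lamE => ?; [left; lia | right].
  by right; apply: leq_trans (ltnW abS); rewrite leq_pmulr.
Qed.

Definition embeddable s := forall p q lo hi, q <= n -> p + s = q -> closed_itv p q ->
  hi <= N -> lo + host_size s <= hi -> exists phi, red_emb p q lo hi phi.

Lemma embeddable0 : embeddable 0.
Proof. by move=> p q lo hi _ pq *; exists idfun; apply: red_emb_nil; lia. Qed.

Lemma sum_blue_pairs_le lo hi s top Y D :
  (forall v, lo <= v < hi -> blue_deg lo hi v < s) -> lo + Y + D <= top - Y -> top <= hi ->
  \sum_(0 <= c < D) count (fun y => ~~ col (lo + y + c) (top - 1 - y)) (index_iota 0 Y)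
    <= Y * (s - 1).
Proof.
move=> low_deg room tophi.
(* For fixed y, the blue pairs are blue edges at the single vertex top - 1 - y. *)
have count_sum (T : Type) (P : pred T) r : count P r = \sum_(i <- r) P i.
  by rewrite -sum1_count big_mkcond.
under eq_bigr do rewrite count_sum.
rewrite exchange_big /= -{2}(subn0 Y) -sum_nat_const_nat big_seq [X in _ <= X]big_seq.
apply: leq_sum => y; rewrite mem_index_iota => /andP [_ yY].
set v := top - 1 - y; pose B : pred nat := fun w => (w != v) && blue v w.
have -> : \sum_(0 <= c < D) (~~ col (lo + y + c) v : nat) =
          count B (index_iota (lo + y) (lo + y + D)).
  rewrite count_sum /index_iota subn0 (_ : lo + y + D - (lo + y) = D); last lia.
  rewrite -[in RHS](addn0 (lo + y)) iotaDl big_map.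
  apply: eq_big_seq => c; rewrite mem_iota => /andP [_ cD].
  by rewrite /B blueC blueE; last lia; rewrite (_ : (lo + y + c != v) = true) //; lia.
have v_range : lo <= v < hi by lia.
have := low_deg v v_range; rewrite /blue_deg /B.
rewrite (count_index_iota_cat _ (_ : lo <= lo + y) (_ : lo + y <= hi)); try lia.
by rewrite (count_index_iota_cat _ (_ : lo + y <= lo + y + D) (_ : lo + y + D <= hi)); lia.
Qed.

Lemma balanced_arc_le a b : balanced a b ->
  forall i, a <= i < b -> i < f i -> f i + 1 - i <= (d - 1) * (b - a) %/ d.
Proof. by move=> bal i iab ifi; rewrite leq_divRL ?(mulnC _ d) ?bal //; lia. Qed.

Lemma balanced_core_room a b s : 0 < s -> a <= b -> b <= n -> b - a <= s -> closed_itv a b ->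
  let m := (d - 1) * (b - a) %/ d in
  m < s /\ (b - a) * h m + 8 * (b - a) <= (b - a) * h s.
Proof.
move=> s_gt0 ab bn bas cl m; rewrite {}/m; case: (posnP (b - a)) => [->|ba].
  by rewrite muln0 div0n !muln0; split=> //; lia.
set m := (d - 1) * (b - a) %/ d.
have /andP [afa fab] := closed_itv_head_arc bn (ltac:(lia) : a < b) cl.
have dm : m * d <= (d - 1) * (b - a) by rewrite leq_divM.
have m_gt0 : 0 < m.
  rewrite /m divn_gt0; last lia.
  have : (d - 1) * 2 <= (d - 1) * (b - a) by rewrite leq_mul2l; lia.
  lia.
have m_lt : m < b - a.
  have : m * d < (b - a) * d.
    by apply: leq_ltn_trans dm _; rewrite mulnC ltn_pmul2l //; lia.
  by rewrite ltn_pmul2r //; lia.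
have dms : d * m <= (d - 1) * s.
  by rewrite mulnC; apply: leq_trans dm _; rewrite leq_mul2l bas orbT.
split; first lia.
have := h_step_short (ltac:(lia) : 0 < m <= s) dms.
by move=> hms; rewrite (mulnC 8) -mulnDr leq_mul2l hms orbT.
Qed.

Lemma spine_host_size p cp cq g : spine p cp cq g ->
  4 * g + 8 * ((f p).+1 - p) + (cq - cp) * h ((d - 1) * (cq - cp) %/ d)
    <= host_size ((f p).+1 - p).
Proof.
move=> sp; have pn : p < n by case: sp.
set s := (f p).+1 - p.
have [pcp cpcq cqfp cl bal] := spine_core sp.
have fpn := f_lt pn.
have [k [lam [k_gt0 sE gE lamE]]] := spine_size (S := s) sp (ltac:(lia)).
have {}sE : s = (cq - cp) + lam + 2 * k := sE.
have [_ core] := balanced_core_room (s := s) (ltac:(lia)) cpcq (ltac:(lia)) (ltac:(lia)) cl.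
have side : lam * (4 * h (s %/ d) + 8) <= lam * h s.
  case: lamE => [->|ds]; first by rewrite !mul0n.
  by rewrite leq_mul2l; have := h_step_div ds; lia.
have arcs : k * 10 <= k * h s by rewrite leq_mul2l h_ge10 ?orbT //; lia.
have -> : host_size s = (cq - cp) * h s + lam * h s + 2 * (k * h s).
  by rewrite /host_size {1}sE; lia.
rewrite !mulnDr in side; lia.
Qed.

Lemma host_size_add a b : host_size a + host_size b <= host_size (a + b).
Proof.
by rewrite /host_size mulnDl leq_add // leq_mul2l h_mono ?orbT // ?leq_addr ?leq_addl.
Qed.

Section InductionStep.

Variable S : nat.
Hypothesis embeddable_lt : forall s, s < S -> embeddable s.

Lemma red_emb_short_arcs m a b lo hi : m < S -> a <= b -> b <= n -> closed_itv a b ->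
  (forall i, a <= i < b -> i < f i -> f i + 1 - i <= m) -> hi <= N ->
  lo + (b - a) * h m <= hi -> exists phi, red_emb a b lo hi phi.
Proof.
move=> mS; move kE: (b - a) => k.
elim/ltn_ind: k a kE lo => k IH a kE lo ab bn cl short hiN room.
case: (posnP k) => k0; first by exists idfun; apply: red_emb_nil; lia.
have a_lt_b : a < b by lia.
have /andP [afa fab] := closed_itv_head_arc bn a_lt_b cl.
have an : a < n by lia.
have cl_tail := closed_itv_behead_arc bn a_lt_b cl.
set l := (f a).+1 - a.
have lm : l <= m by have := short a; rewrite /l; lia.
have lk : l * h m <= k * h m by rewrite leq_mul2r; apply/orP; right; lia.
have [phi1 e1] : exists phi, red_emb a (f a).+1 lo (lo + l * h m) phi.
  apply: (embeddable_lt (s := l)); rewrite /l; try lia.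
  - exact: closed_itv_arc.
  - by rewrite -/l leq_add2l leq_mul2l h_mono ?orbT.
have [phi2 e2] : exists phi, red_emb (f a).+1 b (lo + l * h m) hi phi.
  apply: (IH (b - (f a).+1)) => //; try lia.
  - by move=> i /andP [fai ib]; apply: short; lia.
eexists; apply: (red_emb_cat (closed_itv_arc an afa) cl_tail _ _ e1 e2); lia.
Qed.

(* The arcs of the spine go to the nested pairs (lo + y + c, top - 1 - y),
   blue pairs being skipped; each step leaves room inside its pair for its
   two side intervals, and the core goes to [lo + X, lo + X + Fc). *)
Lemma red_emb_spine lo X Fc c Y top : top = lo + X + X + Fc -> Y + c <= X -> top <= N ->
  forall p cp cq g, spine p cp cq g -> f p < p + S ->
  forall psi, red_emb cp cq (lo + X) (lo + X + Fc) psi ->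
  forall y0, y0 + count (fun y => ~~ col (lo + y + c) (top - 1 - y)) (index_iota y0 Y) + g <= Y ->
  exists phi, red_emb p (f p).+1 (lo + y0 + c) (top - y0) phi.
Proof.
move=> topE YX topN p cp cq g sp.
elim: sp => {p cp cq g} [p pn pfp bal | p x cp cq g pn pfp px xfx fxfp clL clR short sp IH]
  pS psi epsi y0 room;
  have := @first_hit (fun y => col (lo + y + c) (top - 1 - y)) y0 Y;
  rewrite /= => /(_ (ltac:(lia))) [y [/andP [y0y yY] red_y cntE]].
  have e := red_emb_arc (a := lo + y + c) (b := top - 1 - y) pn pfp epsi
    (ltac:(lia)) (ltac:(lia)) (ltac:(lia)) red_y.
  by eexists; apply: red_emb_widen e _ _; lia.
set g' := maxn (host_size (x - p.+1)) (host_size (f p - (f x).+1)) + 1.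
have fpn := f_lt pn.
have xn : x < n by lia.
have := count_index_iota_cat (fun y => ~~ col (lo + y + c) (top - 1 - y))
  (_ : y.+1 <= y + g') (_ : y + g' <= Y).
move=> /(_ (ltac:(lia)) (ltac:(lia))) cnt_split.
have [phiM eM] := IH (ltac:(lia)) psi epsi (y + g') (ltac:(lia)).
have [phiL eL] : exists phi, red_emb p.+1 x (lo + y + c + 1) (lo + y + c + g') phi.
  by apply: (embeddable_lt (s := x - p.+1)); try lia.
have [phiR eR] : exists phi, red_emb (f x).+1 (f p) (top - y - g') (top - y - 1) phi.
  by apply: (embeddable_lt (s := f p - (f x).+1)); try lia.
have clM := closed_itv_arc xn xfx.
have eLM := red_emb_cat clL clM (ltac:(lia)) (ltac:(lia)) eL eM
  (ltac:(lia)) (ltac:(lia)) (ltac:(lia)).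
have clLM := closed_itv_cat clL clM (ltac:(lia)) (ltac:(lia)).
have eLMR := red_emb_cat clLM clR (ltac:(lia)) (ltac:(lia)) eLM eR
  (ltac:(lia)) (ltac:(lia)) (ltac:(lia)).
have e := red_emb_arc (a := lo + y + c) (b := top - 1 - y) pn pfp eLMR
  (ltac:(lia)) (ltac:(lia)) (ltac:(lia)) red_y.
by eexists; apply: red_emb_widen e _ _; lia.
Qed.

Lemma embeddable_arc p lo hi : p < n -> p < f p -> S = (f p).+1 - p -> hi <= N ->
  lo + host_size S <= hi -> (forall v, lo <= v < hi -> blue_deg lo hi v < S) ->
  exists phi, red_emb p (f p).+1 lo hi phi.
Proof.
move=> pn pfp SE hiN room low_deg; have fpn := f_lt pn.
have [cp [cq [g sp]]] := spine_exists pn pfp.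
have [pcp cpcq cqfp cl bal] := spine_core sp.
have budget := spine_host_size sp; rewrite -SE in budget.
set m := (d - 1) * (cq - cp) %/ d in budget.
have [mS _] := balanced_core_room (s := S) (ltac:(lia)) cpcq (ltac:(lia)) (ltac:(lia)) cl.
set X := 2 * g + 4 * S; set Y := 2 * (g + S); set Fc := (cq - cp) * h m.
set top := lo + X + X + Fc.
have [psi epsi] : exists psi, red_emb cp cq (lo + X) (lo + X + Fc) psi.
  apply: (red_emb_short_arcs (m := m)) => //; try lia.
  exact: balanced_arc_le.
(* Averaging over the 2S shifts c: as all blue degrees are below S, some shift
   makes at most g + S of the Y pairs blue. *)
pose blue_pairs c := count (fun y => ~~ col (lo + y + c) (top - 1 - y)) (index_iota 0 Y).
have [c cS few_blue] := exists_le_mean blue_pairs (ltac:(lia) : 0 < 2 * S).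
have sum_le := sum_blue_pairs_le (top := top) (Y := Y) (D := 2 * S) low_deg
  (ltac:(lia)) (ltac:(lia)).
have c_good : blue_pairs c <= g + S.
  rewrite -(leq_pmul2l (_ : 0 < 2 * S)); last lia.
  apply: leq_trans few_blue (leq_trans sum_le _).
  by rewrite /Y [leqRHS]mulnAC leq_mul2l leq_subr orbT.
rewrite /blue_pairs /= in c_good.
have [phi ephi] := red_emb_spine (lo := lo) (X := X) (Fc := Fc) (c := c) (Y := Y) (top := top)
  erefl (ltac:(lia)) (ltac:(lia)) sp (ltac:(lia)) epsi (y0 := 0) (ltac:(lia)).
by exists phi; apply: red_emb_widen ephi _ _; lia.
Qed.

Lemma embeddable_step : embeddable S.
Proof.
move=> p q lo hi qn pq cl hiN room.
case: (posnP S) => [S0|S_gt0]; first by rewrite S0 in pq room; exact: embeddable0.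
case: (boolP (has (fun v => S <= blue_deg lo hi v) (index_iota lo hi))) => [|/hasPn low_deg].
  case/hasP=> v; rewrite mem_index_iota => vlohi deg_ge.
  by apply: (red_emb_blue_nbhd (v := v)) => //; lia.
have {}low_deg v : lo <= v < hi -> blue_deg lo hi v < S.
  by move=> vlohi; rewrite ltnNge low_deg // mem_index_iota.
have /andP [pfp fpq] := closed_itv_head_arc qn (ltac:(lia) : p < q) cl.
have pn : p < n by lia.
case: (ltnP (f p).+1 q) => [fpq'|qfp]; last first.
  have -> : q = (f p).+1 by lia.
  by apply: embeddable_arc => //; lia.
set a := (f p).+1 - p; set b := q - (f p).+1.
have cl_arc := closed_itv_arc pn pfp.
have cl_tail := closed_itv_behead_arc qn (ltac:(lia) : p < q) cl.
have sizes := host_size_add a b; rewrite (_ : a + b = S) in sizes; last lia.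
have [phi1 e1] : exists phi, red_emb p (f p).+1 lo (lo + host_size a) phi.
  by apply: (embeddable_lt (s := a)) => //; lia.
have [phi2 e2] : exists phi, red_emb (f p).+1 q (lo + host_size a) hi phi.
  by apply: (embeddable_lt (s := b)) => //; lia.
by eexists; apply: (red_emb_cat cl_arc cl_tail _ _ e1 e2); lia.
Qed.

End InductionStep.

Lemma embeddable_all s : embeddable s.
Proof. by elim/ltn_ind: s => s IH; apply: embeddable_step. Qed.

End Embeddings.

Section ParenthesisMatching.

Variables (n : nat) (m : rel 'I_n).
Hypothesis m_matching : is_parenthesis_matching m.

(* Extended by the identity outside [0, n). *)
Definition mate (i : nat) : nat :=
  if insub i is Some i' then (if [pick j | m i' j] is Some j then val j else i) else i.

Lemma mateP (i : 'I_n) : exists2 j : 'I_n, mate i = j & m i j.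
Proof.
have [_ _ m_unique _] := m_matching.
rewrite /mate valK; case: pickP => [j mij|no_mate]; first by exists j.
by have [j [mij _]] := m_unique i; move: (no_mate j); rewrite mij.
Qed.

Lemma mate_eq (i j : 'I_n) : m i j -> mate i = j.
Proof.
have [_ _ m_unique _] := m_matching; move=> mij; have [k -> mik] := mateP i.
by have [x [_ ux]] := m_unique i; rewrite -(ux _ mij) (ux _ mik).
Qed.

Lemma mate_lt i : i < n -> mate i < n.
Proof. by move=> i_lt; have [j -> _] := mateP (Ordinal i_lt). Qed.

Lemma mateK i : i < n -> mate (mate i) = i.
Proof.
have [m_sym _ _ _] := m_matching; move=> i_lt; have [j -> mij] := mateP (Ordinal i_lt).
by apply: (mate_eq (i := j) (j := Ordinal i_lt)); rewrite m_sym.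
Qed.

Lemma mate_neq i : i < n -> mate i != i.
Proof.
have [_ m_irr _ _] := m_matching; move=> i_lt; have [j -> mij] := mateP (Ordinal i_lt).
apply: contraTneq mij => ji.
by rewrite (_ : j = Ordinal i_lt) ?m_irr //; exact: val_inj.
Qed.

Lemma mate_noncrossing i j :
  i < n -> i < mate i -> i < j -> j < mate i -> i < mate j < mate i.
Proof.
have [m_sym m_irr _ m_nc] := m_matching; move=> i_lt imi ij jmi.
have j_lt : j < n by have := mate_lt i_lt; lia.
have [a aE mia] := mateP (Ordinal i_lt); have [b bE mjb] := mateP (Ordinal j_lt).
rewrite /= in aE bE; rewrite aE bE in imi jmi *.
have ba : (b : nat) != a.
  by apply: contraTneq ij => ba; rewrite -(mateK i_lt) -(mateK j_lt) aE bE ba ltnn.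
have bi : (b : nat) != i.
  by apply: contraTneq jmi => bi; rewrite -(mateK j_lt) bE bi aE ltnn.
case: (ltngtP j b) => [jb|bj|jb].
- by have := m_nc (Ordinal i_lt) a (Ordinal j_lt) b imi jb mia mjb; rewrite /=; lia.
- have mbj : m b (Ordinal j_lt) by rewrite m_sym.
  by have := m_nc (Ordinal i_lt) a b (Ordinal j_lt) imi bj mia mbj; rewrite /=; lia.
- by move: mjb; rewrite (_ : b = Ordinal j_lt) ?m_irr //; exact: val_inj.
Qed.

End ParenthesisMatching.

(* Pairs outside [0, N) count as red. *)
Definition nat_coloring N (c : coloring N) (x y : nat) : bool :=
  if insub x is Some x' then (if insub y is Some y' then c x' y' else true) else true.

Lemma nat_coloringE N (c : coloring N) (x y : 'I_N) : nat_coloring c x y = c x y.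
Proof. by rewrite /nat_coloring !valK. Qed.

Lemma nat_coloring_no_blue_triangle N (c : coloring N) : ~ blue_triangle c ->
  forall x y z, x < y -> y < z -> z < N ->
    [|| nat_coloring c x y, nat_coloring c x z | nat_coloring c y z].
Proof.
move=> no_blue x y z xy yz zN.
have xN : x < N by lia.
have yN : y < N by lia.
rewrite -[x]/(val (Ordinal xN)) -[y]/(val (Ordinal yN)) -[z]/(val (Ordinal zN)).
rewrite !nat_coloringE; apply/negPn/negP; rewrite !negb_or => /and3P [bxy bxz byz].
by apply: no_blue; exists (Ordinal xN), (Ordinal yN), (Ordinal zN).
Qed.

Definition admissible_growth d (h : nat -> nat) :=
  [/\ 2 <= d, forall x y, x <= y -> h x <= h y,
      forall s m, 0 < m <= s -> d * m <= (d - 1) * s -> h m + 8 <= h s,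
      forall s, d <= s -> 4 * h (s %/ d) + 12 <= h s &
      forall s, 0 < s -> 10 <= h s].

Lemma arrows_K3_of_admissible n (m : rel 'I_n) d h :
  is_parenthesis_matching m -> admissible_growth d h -> arrows_K3 m (n * h n).
Proof.
move=> m_matching [d_ge2 h_mono h_short h_div h_ge10] c.
case: (classic (blue_triangle c)) => [|no_blue]; [by right | left].
have cl : closed_itv (mate m) 0 n.
  by move=> i /andP [_ i_lt]; rewrite leq0n mate_lt.
have [phi [mono range red]] := embeddable_all (mate_lt m_matching) (mateK m_matching)
  (mate_neq m_matching) (mate_noncrossing m_matching) (nat_coloring_no_blue_triangle no_blue)
  d_ge2 h_mono h_short h_div h_ge10 (s := n) (p := 0) (lo := 0) (hi := n * h n)
  (leqnn n) (add0n n) cl (leqnn _) (leqnn _).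
have u_range (u : 'I_n) : 0 <= u < n by rewrite leq0n ltn_ord.
have phi_lt (u : 'I_n) : phi u < n * h n by have /andP [_ ->] := range u (u_range u).
exists (fun u => Ordinal (phi_lt u)); split=> [u v uv | u v uv muv]; first exact: mono.
have mate_u := mate_eq m_matching muv.
by rewrite -nat_coloringE /= -mate_u; apply: red (u_range u) _; rewrite mate_u.
Qed.

Local Open Scope R_scope.

Definition up_nat (r : R) : nat := Z.to_nat (up r).

Lemma up_nat_spec r : 0 <= r -> r < INR (up_nat r) <= r + 1.
Proof.
move=> r_ge0; have [r_lt r_le] := archimed r.
have up_gt0 : (0 < up r)%Z by apply: lt_IZR; lra.
by rewrite /up_nat INR_IZR_INZ Z2Nat.id; [lra | lia].
Qed.

Lemma up_nat_mono r r' : 0 <= r -> r <= r' -> (up_nat r <= up_nat r')%N.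
Proof.
move=> r_ge0 rr'; have [lt1 le1] := up_nat_spec r_ge0.
have [lt2 le2] := up_nat_spec (Rle_trans _ _ _ r_ge0 rr').
rewrite leqNgt; apply/negP => /ltP /le_INR; rewrite S_INR; lra.
Qed.

(* Stdlib's [ln] is 0 on nonpositive arguments, hence this junk value. *)
Lemma Rpower_0l e : Rpower 0 e = 1.
Proof.
rewrite /Rpower (_ : ln 0 = 0) ?Rmult_0_r ?exp_0 //.
by rewrite /ln; case: (Rlt_dec 0 0) => // lt00; case: (Rlt_irrefl _ lt00).
Qed.

Lemma Rpower_1l e : Rpower 1 e = 1.
Proof. by rewrite /Rpower ln_1 Rmult_0_r exp_0. Qed.

Lemma Rpower_gt0 x e : 0 < Rpower x e.
Proof. exact: exp_pos. Qed.

Lemma Rpower_ge1 x e : 1 <= x -> 0 <= e -> 1 <= Rpower x e.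
Proof. by move=> x_ge1 e_ge0; rewrite -(Rpower_1l e); apply: Rle_Rpower_l; lra. Qed.

Lemma Rpower_Rinv y e : 0 < y -> Rpower (/ y) e = / Rpower y e.
Proof. by move=> y_gt0; rewrite /Rpower ln_Rinv // -Ropp_mult_distr_r exp_Ropp. Qed.

Lemma INR_ge1 k : (0 < k)%N -> 1 <= INR k.
Proof. by move=> k_gt0; apply: (le_INR 1); apply/leP. Qed.

Lemma Rpower_INR_le e x y : 0 <= e -> (x <= y)%N -> Rpower (INR x) e <= Rpower (INR y) e.
Proof.
move=> e_ge0 xy; case: x xy => [|x] xy.
  rewrite Rpower_0l; case: y xy => [|y] _; first by rewrite Rpower_0l; lra.
  by apply: Rpower_ge1 => //; apply: INR_ge1.
by apply: Rle_Rpower_l => //; split; [apply: lt_0_INR; lia | apply/le_INR/leP].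
Qed.

Section Growth.

Variable eps : R.
Hypothesis eps_gt0 : 0 < eps.

(* These constants give d^eps >= 8 and A (1 - (1 - 1/d)^eps) >= 9, which is
   what the inequalities of [admissible_growth] require. *)
Definition growth_base : nat := up_nat (Rpower 8 (/ eps)) + 2.
Local Notation d := growth_base.

Definition growth_gap := 1 - Rpower (1 - / INR d) eps.
Definition growth_const := 9 / growth_gap + 33.
Local Notation A := growth_const.

Definition growth s := up_nat (A * Rpower (INR s) eps).

Lemma growth_base_ge2 : (2 <= d)%N.
Proof. by rewrite /growth_base; lia. Qed.

Lemma INR_growth_base : 2 <= INR d.
Proof. by apply: (le_INR 2); apply/leP; exact: growth_base_ge2. Qed.

Lemma growth_base_pow : 8 <= Rpower (INR d) eps.
Proof.
have [lt _] := up_nat_spec (Rlt_le _ _ (Rpower_gt0 8 (/ eps))).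
have root_le : Rpower 8 (/ eps) <= INR d by rewrite /growth_base plus_INR /=; lra.
rewrite -{1}(Rpower_1 8); last lra.
rewrite -(Rinv_l eps); last lra.
by rewrite -Rpower_mult; apply: Rle_Rpower_l; [lra | split=> //; exact: Rpower_gt0].
Qed.

Lemma growth_gap_gt0 : 0 < growth_gap.
Proof.
have dR := INR_growth_base.
have inv_d_gt0 : 0 < / INR d by apply: Rinv_0_lt_compat; lra.
have : Rpower (1 - / INR d) eps < Rpower 1 eps.
  apply: Rlt_Rpower_l => //; split; last lra.
  by have := Rinv_le_contravar _ _ (ltac:(lra) : 0 < 2) dR; lra.
by rewrite Rpower_1l /growth_gap; lra.
Qed.

Lemma growth_const_ge33 : 33 <= A.
Proof.
have := Rdiv_lt_0_compat _ _ (ltac:(lra) : 0 < 9) growth_gap_gt0.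
by rewrite /growth_const; lra.
Qed.

Lemma growth_const_gap : 9 <= A * growth_gap.
Proof.
have gap_gt0 := growth_gap_gt0.
by rewrite /growth_const Rmult_plus_distr_r /Rdiv Rmult_assoc Rinv_l; lra.
Qed.

Lemma growth_spec s :
  A * Rpower (INR s) eps < INR (growth s) <= A * Rpower (INR s) eps + 1.
Proof.
apply: up_nat_spec; apply: Rmult_le_pos; last exact/Rlt_le/Rpower_gt0.
by have := growth_const_ge33; lra.
Qed.

Lemma growth_const_pow_ge33 s : (0 < s)%N -> 33 <= A * Rpower (INR s) eps.
Proof.
move=> s_gt0; rewrite -[33]Rmult_1_r; apply: Rmult_le_compat; try lra.
- exact: growth_const_ge33.
- exact: Rpower_ge1 (INR_ge1 s_gt0) (Rlt_le _ _ eps_gt0).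
Qed.

Lemma growth_mono x y : (x <= y)%N -> (growth x <= growth y)%N.
Proof.
move=> xy; apply: up_nat_mono.
  by apply: Rmult_le_pos; [have := growth_const_ge33; lra | exact/Rlt_le/Rpower_gt0].
apply: Rmult_le_compat_l; first by have := growth_const_ge33; lra.
by apply: Rpower_INR_le => //; lra.
Qed.

Lemma growth_step_short s m :
  (0 < m <= s)%N -> (d * m <= (d - 1) * s)%N -> (growth m + 8 <= growth s)%N.
Proof.
move=> /andP [m_gt0 ms] dm; have dR := INR_growth_base.
have mR := INR_ge1 m_gt0; have sR := INR_ge1 (leq_trans m_gt0 ms).
have m_le : INR m <= (1 - / INR d) * INR s.
  have : INR d * INR m <= (INR d - 1) * INR s.
    rewrite -mult_INR -[1]/(INR 1) -minus_INR; last by apply/leP; have := growth_base_ge2; lia.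
    by rewrite -mult_INR; apply/le_INR/leP.
  move=> dmR; apply: (Rmult_le_reg_l (INR d)); first lra.
  by rewrite -Rmult_assoc Rmult_minus_distr_l Rmult_1_r Rinv_r; lra.
have pow_le : Rpower (INR m) eps <= Rpower (1 - / INR d) eps * Rpower (INR s) eps.
  have := Rinv_le_contravar _ _ (ltac:(lra) : 0 < 2) dR => inv_le.
  rewrite Rpower_mult_distr; try lra.
  by apply: Rle_Rpower_l; lra.
have s_pow := Rpower_ge1 sR (Rlt_le _ _ eps_gt0).
have gain : A * Rpower (INR m) eps + 9 <= A * Rpower (INR s) eps.
  have := growth_const_gap; have := growth_const_ge33; rewrite /growth_gap => *; nra.
have := growth_spec m; have := growth_spec s => *.
apply/leP/INR_le; rewrite plus_INR (_ : INR 8 = 8); last by rewrite /=; lra.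
lra.
Qed.

Lemma growth_step_div s : (d <= s)%N -> (4 * growth (s %/ d) + 12 <= growth s)%N.
Proof.
move=> ds; have dR := INR_growth_base.
have sd_gt0 : (0 < s %/ d)%N by rewrite divn_gt0 //; have := growth_base_ge2; lia.
have sd_le : INR (s %/ d) <= INR s / INR d.
  apply: (Rmult_le_reg_r (INR d)); first lra.
  rewrite /Rdiv Rmult_assoc Rinv_l; last lra.
  rewrite Rmult_1_r -mult_INR.
  by apply/le_INR/leP; rewrite leq_divM.
have sR := INR_ge1 (leq_trans sd_gt0 (leq_div s d)).
have pow_le : Rpower (INR (s %/ d)) eps <= Rpower (INR s) eps / 8.
  have sdR := INR_ge1 sd_gt0.
  have inv_d_gt0 : 0 < / INR d by apply: Rinv_0_lt_compat; lra.
  apply: Rle_trans (_ : Rpower (INR s / INR d) eps <= _); first by apply: Rle_Rpower_l; lra.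
  rewrite /Rdiv -Rpower_mult_distr ?Rpower_Rinv; try lra.
  apply: Rmult_le_compat_l; first exact/Rlt_le/Rpower_gt0.
  by apply: Rinv_le_contravar; [lra | exact: growth_base_pow].
have A_pow_le : A * Rpower (INR (s %/ d)) eps <= A * (Rpower (INR s) eps / 8).
  by apply: Rmult_le_compat_l => //; have := growth_const_ge33; lra.
have := growth_const_pow_ge33 (leq_trans sd_gt0 (leq_div s d)).
have := growth_spec (s %/ d); have := growth_spec s => *.
have INR4 : INR 4 = 4 by rewrite /=; lra.
have INR12 : INR 12 = 12 by rewrite /=; lra.
by apply/leP/INR_le; rewrite plus_INR mult_INR INR4 INR12; lra.
Qed.

Lemma growth_ge10 s : (0 < s)%N -> (10 <= growth s)%N.
Proof.
move=> s_gt0; have := growth_spec s; have := growth_const_pow_ge33 s_gt0 => *.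
apply/leP/INR_le; rewrite (_ : INR 10 = 10); last by rewrite /=; lra.
lra.
Qed.

Lemma growth_admissible : admissible_growth d growth.
Proof.
split; [exact: growth_base_ge2 | exact: growth_mono | exact: growth_step_short |
        exact: growth_step_div | exact: growth_ge10].
Qed.

Lemma host_size_growth_le s : INR (s * growth s) <= (A + 1) * Rpower (INR s) (1 + eps).
Proof.
have A_ge := growth_const_ge33.
case: s => [|s]; first by rewrite /= Rpower_0l; lra.
have sR := INR_ge1 (ltn0Sn s).
have s_pow := Rpower_ge1 sR (Rlt_le _ _ eps_gt0).
have [_ growth_le] := growth_spec s.+1.
have : INR s.+1 * INR (growth s.+1) <=
       INR s.+1 * (A * Rpower (INR s.+1) eps + Rpower (INR s.+1) eps).
  by apply: Rmult_le_compat_l; lra.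
rewrite Rpower_plus Rpower_1 ?mult_INR; last lra.
lra.
Qed.

End Growth.

Theorem theorem2p8 :
  forall eps : R, (0 < eps)%R ->
  exists c : R,
    forall (n : nat) (m : rel 'I_n), is_parenthesis_matching m ->
      exists N : nat,
        (INR N <= c * Rpower (INR n) (1 + eps))%R /\ arrows_K3 m N.
Proof.
move=> eps eps_gt0; exists (growth_const eps + 1) => n m m_matching.
exists (n * growth eps n)%N; split; first exact: host_size_growth_le.
exact: arrows_K3_of_admissible m_matching (growth_admissible eps_gt0).
Qed.
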